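(* Let $(X_i,T_i,\delta_i,\xi_i,\xi_i\nu_i)$, $i=1,\ldots,n$, be observations from the mixture cure model with partially known cure status (context), with distinct observed times $T_{(1)}<\cdots<T_{(n)}$ and concomitants $\delta_{[i]},\xi_{[i]},\nu_{[i]}$, and let $B_{h[i]}(x)\ge 0$ be the Nadaraya–Watson weights at a fixed covariate value $x$. Consider the local (kernel-weighted) likelihood of a subprobability distribution putting mass $P_i=P_i(x)\ge 0$ at $T_{(i)}$, $i=1,\dots,n$, with $\sum_i P_i\le 1$ and remaining mass $1-\sum_iP_i$ at $+\infty$ (the cured fraction): $$L(P_1,\ldots,P_n)=\prod_{i=1}^n P_i^{B_{h[i]}(x)\mathbf 1(\delta_{[i]}=1)}\Big(1-\sum_{j=1}^{i-1}P_j\Big)^{B_{h[i]}(x)\mathbf 1(\delta_{[i]}=0,\xi_{[i]}\nu_{[i]}=0)}\Big(1-\sum_{j=1}^{n}P_j\Big)^{B_{h[i]}(x)\mathbf 1(\delta_{[i]}=0,\xi_{[i]}\nu_{[i]}=1)}.$$ Then $L$ is maximized by a distribution whose survival function $1-\sum_{j:T_{(j)}\le t}P_j$ equals $$\widehat S_h^c(t\mid x)=1-\widehat F_h^c(t\mid x)=\prod_{i=1}^{n}\left\{1-\frac{\delta_{[i]}B_{h[i]}(x)\mathbf 1(T_{(i)}\le t)}{\sum_{j=i}^{n}B_{h[j]}(x)+\sum_{j=1}^{i-1}B_{h[j]}(x)\mathbf 1(\xi_{[j]}\nu_{[j]}=1)}\right\},$$ i.e. $1-\widehat F_h^c(t\mid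 x)$ is the nonparametric local maximum likelihood estimator of $1-F(t\mid x)$.
   Context: Mixture cure model: $Y\in(0,\infty]$ survival time ($Y=\infty$ iff cured), $\nu=\mathbf 1(Y=\infty)$, censoring time $C$ conditionally independent of $(Y,\nu)$ given the covariate $X$; observed $T=\min(Y,C)$, $\delta=\mathbf 1(Y\le C)$, $\xi$ indicates whether the cure status is known, and $\xi\nu$ is observed. $F(t\mid x)=P(Y\le t\mid X=x)$. Nadaraya–Watson weights: $B_{hi}(x)=K_h(x-X_i)/\sum_{j}K_h(x-X_j)$ with $K_h(u)=K(u/h)/h$ for a kernel $K$ and bandwidth $h$; $B_{h[i]}(x)$ is the weight of the observation with time $T_{(i)}$. Denominators in the product are assumed nonzero. *)

From HB Require Import structures.
From mathcomp Require Import all_boot all_order all_algebra.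
From mathcomp Require Import all_classical all_reals all_analysis.
Set Implicit Arguments. Unset Strict Implicit. Unset Printing Implicit Defensive.
Import Order.TTheory GRing.Theory Num.Theory.
Local Open Scope ring_scope.

Section Defs.
Variable R : realType.

Definition Kh (K : R -> R) (h u : R) : R := K (u / h) / h.

(* Nadaraya-Watson weight B_{hi}(x) of observation i (observations are
   indexed in increasing order of observed time, so i is also [i]). *)
Definition nw_weight n (K : R -> R) (h : R) (X : 'I_n -> R) (x : R) (i : 'I_n) : R :=
  Kh K h (x - X i) / \sum_(j < n) Kh K h (x - X j).

(* Local likelihood L(P_1,...,P_n); B = weights, delta = censoring indicator,
   cK = xi*nu (cure status known and cured). *)
Definition local_lik n (B : 'I_n -> R) (delta cK : 'I_n -> bool) (P : 'I_n -> R) : R :=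
  \prod_(i < n)
    ( powR (P i) (B i * (delta i)%:R)
    * powR (1 - \sum_(j < n | (j < i)%N) P j) (B i * (~~ delta i && ~~ cK i)%:R)
    * powR (1 - \sum_(j < n) P j) (B i * (~~ delta i && cK i)%:R) ).

Definition feasible n (P : 'I_n -> R) : Prop :=
  (forall i, 0 <= P i) /\ \sum_(j < n) P j <= 1.

Definition risk_denom n (B : 'I_n -> R) (cK : 'I_n -> bool) (i : 'I_n) : R :=
  \sum_(j < n | (i <= j)%N) B j + \sum_(j < n | (j < i)%N) B j * (cK j)%:R.

Definition S_hat n (T : 'I_n -> R) (B : 'I_n -> R) (delta cK : 'I_n -> bool) (t : R) : R :=
  \prod_(i < n)
    (1 - (delta i)%:R * B i * ((T i <= t)%R)%:R / risk_denom B cK i).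

End Defs.

From HB Require Import structures.
From mathcomp Require Import all_boot all_order all_algebra.
From mathcomp Require Import all_classical all_reals all_analysis.
From mathcomp Require Import ring lra.
Set Implicit Arguments. Unset Strict Implicit. Unset Printing Implicit Defensive.
Import Order.TTheory GRing.Theory Num.Theory.
Local Open Scope ring_scope.

(* Reparametrize a subprobability P on T_(1) < ... < T_(n) by its discrete
   hazards lam_k in [0, 1], P_j = lam_j * prod_(k < j) (1 - lam_k), so that
   1 - sum_(j < m) P_j = prod_(k < m) (1 - lam_k).  In these coordinates the
   local likelihood factorizes as prod_k lam_k ^ a_k * (1 - lam_k) ^ b_k, where
   a_k is the weight of an event at T_(k) and b_k the weight of the observations
   known to survive T_(k) (later ones, and those known to be cured).  Each
   Bernoulli factor is maximized at lam_k = a_k / (a_k + b_k), by Gibbs'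
   inequality ln x <= x - 1; for an uncensored k, a_k + b_k is exactly the
   risk-set denominator of the estimator, so the survival function of the
   maximizer is the product-limit estimator S_hat. *)

Section PowR.
Variable R : realType.
Implicit Types x p q : R.

Lemma powRD_ge0 x p q : 0 <= p -> 0 <= q -> powR x (p + q) = powR x p * powR x q.
Proof.
move=> p_ge0 q_ge0; have [pq0|pq_neq0] := eqVneq (p + q) 0.
  have [-> ->] : p = 0 /\ q = 0 by split; lra.
  by rewrite addr0 powRr0 mulr1.
by rewrite powRD ?(negPf pq_neq0).
Qed.

Lemma powR_prod (I : Type) (s : seq I) (P : pred I) (F : I -> R) p :
  (forall i, 0 <= F i) ->
  powR (\prod_(i <- s | P i) F i) p = \prod_(i <- s | P i) powR (F i) p.
Proof.
move=> F_ge0; elim: s => [|i s IHs]; first by rewrite !big_nil powR1.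
by rewrite !big_cons; case: (P i); rewrite // powRM ?IHs ?prodr_ge0.
Qed.

Lemma powR_sum (I : Type) (s : seq I) (F : I -> R) x :
  (forall i, 0 <= F i) ->
  powR x (\sum_(i <- s) F i) = \prod_(i <- s) powR x (F i).
Proof.
move=> F_ge0; elim: s => [|i s IHs]; first by rewrite !big_nil powRr0.
by rewrite !big_cons powRD_ge0 ?IHs ?sumr_ge0.
Qed.

Lemma prod_powR_narrow (g : nat -> R) p n m : (m <= n)%N ->
  \prod_(k < m) powR (g k) p = \prod_(k < n) powR (g k) ((k < m)%N%:R * p).
Proof.
move=> mn; rewrite (eq_bigr (fun k : 'I_n => if (k < m)%N then powR (g k) p else 1)).
  by rewrite -big_mkcond (big_ord_narrow mn).
by move=> k _; case: ifP; rewrite ?mul1r ?mul0r ?powRr0.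
Qed.

Lemma powR_le1 x p : 0 <= x <= 1 -> 0 <= p -> powR x p <= 1.
Proof.
case/andP=> x_ge0 x_le1 p_ge0; rewrite /powR; case: ifP => _.
  by case: (p == 0); rewrite ?ler01.
by rewrite expR_le1 mulr_ge0_le0 ?ln_le0.
Qed.

Lemma ln_le_subr1 x : 0 < x -> ln x <= x - 1.
Proof.
move=> x_gt0; have := @le_ln1Dx R (x - 1); rewrite subrKC; apply.
by rewrite ltrBrDl subrr.
Qed.

End PowR.

Section BernoulliLikelihood.
Variable R : realType.
Implicit Types a b l m : R.

Lemma bernoulli_loglik_max a b l m : 0 <= a -> 0 <= b -> 0 < l < 1 -> 0 < m < 1 ->
  m * (a + b) = a -> a * ln l + b * ln (1 - l) <= a * ln m + b * ln (1 - m).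
Proof.
move=> a_ge0 b_ge0 /andP[l_gt0 l_lt1] /andP[m_gt0 m_lt1] am.
have l'_gt0 : 0 < 1 - l by rewrite subr_gt0.
have m'_gt0 : 0 < 1 - m by rewrite subr_gt0.
have := ler_wpM2l a_ge0 (ln_le_subr1 (divr_gt0 l_gt0 m_gt0)).
have := ler_wpM2l b_ge0 (ln_le_subr1 (divr_gt0 l'_gt0 m'_gt0)).
rewrite !ln_div ?posrE //.
have al : a * (l / m) = l * (a + b) by rewrite -[in LHS]am; field; lra.
have bl : b * ((1 - l) / (1 - m)) = (1 - l) * (a + b).
  have bm : (1 - m) * (a + b) = b by lra.
  by rewrite -[in LHS]bm; field; lra.
(* the two upper bounds add up to l (a + b) - a + (1 - l) (a + b) - b = 0 *)
rewrite !mulrBr !mulr1 al bl; lra.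
Qed.

Lemma bernoulli_lik_max a b l m : 0 <= a -> 0 <= b -> 0 <= l <= 1 ->
  m * (a + b) = a -> powR l a * powR (1 - l) b <= powR m a * powR (1 - m) b.
Proof.
move=> a_ge0 b_ge0 l01 am.
have l'01 : 0 <= 1 - l <= 1 by apply/andP; split; lra.
have [a0|a_neq0] := eqVneq a 0.
  have [b0|b_neq0] := eqVneq b 0; first by rewrite a0 b0 !powRr0.
  have -> : m = 0 by apply: (mulIf b_neq0); rewrite mul0r; move: am; rewrite a0 add0r.
  by rewrite a0 !powRr0 subr0 powR1 !mul1r powR_le1.
have [b0|b_neq0] := eqVneq b 0.
  have -> : m = 1 by apply: (mulIf a_neq0); rewrite mul1r; move: am; rewrite b0 addr0.
  by rewrite b0 !powRr0 !mulr1 powR1 powR_le1.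
have a_gt0 : 0 < a by rewrite lt_neqAle eq_sym a_neq0.
have b_gt0 : 0 < b by rewrite lt_neqAle eq_sym b_neq0.
have m01 : 0 < m < 1 by apply/andP; split; nra.
have [l0|l_neq0] := eqVneq l 0.
  by rewrite l0 powR0 ?mul0r ?mulr_ge0 ?powR_ge0.
have [l1|l_neq1] := eqVneq l 1.
  by rewrite l1 subrr powR0 ?mulr0 ?mulr_ge0 ?powR_ge0.
have l01' : 0 < l < 1 by rewrite !lt_neqAle eq_sym l_neq0 l_neq1; case/andP: l01 => -> ->.
case/andP: (m01) (l01') => m_gt0 m_lt1 /andP[l_gt0 l_lt1].
rewrite /powR !gt_eqF ?subr_gt0 // -!expRD ler_expR.
exact: bernoulli_loglik_max.
Qed.

End BernoulliLikelihood.

Section HazardParametrization.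
Variable R : realType.
Implicit Types lam : nat -> R.

Definition hazard_mass lam (j : nat) : R := lam j * \prod_(k < j) (1 - lam k).

Lemma hazard_survival lam m :
  1 - \sum_(j < m) hazard_mass lam j = \prod_(k < m) (1 - lam k).
Proof.
elim: m => [|m IHm]; first by rewrite !big_ord0 subr0.
by rewrite big_ord_recr [RHS]big_ord_recr /= {2}/hazard_mass -IHm; ring.
Qed.

Lemma hazard_survival_narrow lam n m : (m <= n)%N ->
  1 - \sum_(j < n | (j < m)%N) hazard_mass lam j = \prod_(k < m) (1 - lam k).
Proof. by move=> mn; rewrite (big_ord_narrow mn) hazard_survival. Qed.

Lemma feasible_hazard_mass lam n : (forall k, 0 <= lam k <= 1) ->
  feasible (fun j : 'I_n => hazard_mass lam j).
Proof.
move=> lam01; have lam'_ge0 k : 0 <= 1 - lam k by case/andP: (lam01 k); lra.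
split=> [j|]; first by rewrite mulr_ge0 ?prodr_ge0 //; case/andP: (lam01 j).
by rewrite -subr_ge0 hazard_survival prodr_ge0.
Qed.

Definition ord_ext0 n (f : 'I_n -> R) (k : nat) : R :=
  if insub k is Some i then f i else 0.

Lemma ord_ext0E n (f : 'I_n -> R) (i : 'I_n) : ord_ext0 f i = f i.
Proof. by rewrite /ord_ext0 valK. Qed.

Lemma ord_ext0_out n (f : 'I_n -> R) k : (n <= k)%N -> ord_ext0 f k = 0.
Proof. by move=> nk; rewrite /ord_ext0 insubF // ltnNge nk. Qed.

Lemma feasible_eq_hazard_mass n (Q : 'I_n -> R) : feasible Q ->
  exists2 lam, (forall k, 0 <= lam k <= 1) & forall j : 'I_n, Q j = hazard_mass lam j.
Proof.
case=> Q_ge0 sumQ_le1; set q := ord_ext0 Q.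
have q_ge0 k : 0 <= q k by rewrite /q /ord_ext0; case: insub.
pose S k := 1 - \sum_(j < k) q j.
have S_succ k : S k.+1 = S k - q k by rewrite /S big_ord_recr /= opprD addrA.
have sumQE : \sum_(j < n) Q j = \sum_(j < n) q j.
  by apply: eq_bigr => j _; rewrite /q ord_ext0E.
have S_ge0 k : (k <= n)%N -> 0 <= S k.
  move=> kn; rewrite subr_ge0 (le_trans _ sumQ_le1) // sumQE (big_ord_widen n q kn).
  by rewrite [leRHS](bigID (fun j : 'I_n => (j < k)%N)) lerDl sumr_ge0.
have q_le_S k : (k < n)%N -> q k <= S k.
  by move=> kn; rewrite -subr_ge0 -S_succ S_ge0.
(* q k / S k is the junk value 0 exactly when S k = 0, and then q k = 0 too *)
pose lam k := q k / S k.
have qE k : (k < n)%N -> q k = lam k * S k.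
  move=> kn; have [S0|S_neq0] := eqVneq (S k) 0; last by rewrite divfK.
  by apply/eqP; rewrite S0 mulr0 eq_le q_ge0 -S0 q_le_S.
exists lam => [k|j].
  have [kn|nk] := ltnP k n; last by rewrite /lam /q ord_ext0_out // mul0r lexx ler01.
  have [S0|S_neq0] := eqVneq (S k) 0.
    by rewrite /lam S0 invr0 mulr0 lexx ler01.
  have S_gt0 : 0 < S k by rewrite lt_neqAle eq_sym S_neq0 S_ge0 // ltnW.
  by rewrite divr_ge0 ?q_ge0 ?(ltW S_gt0) // ler_pdivrMr // mul1r q_le_S.
have S_prod k : (k <= n)%N -> S k = \prod_(i < k) (1 - lam i).
  elim: k => [|k IHk] kn; first by rewrite /S !big_ord0 subr0.
  by rewrite S_succ big_ord_recr /= -(IHk (ltnW kn)) (qE k kn); ring.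
have := qE j (ltn_ord j); rewrite /q ord_ext0E => ->.
by rewrite /hazard_mass (S_prod j (ltnW (ltn_ord j))).
Qed.

End HazardParametrization.

Section LocalLikelihood.
Variables (R : realType) (n : nat) (B : 'I_n -> R) (delta cK : 'I_n -> bool).
Hypothesis B_ge0 : forall i, 0 <= B i.
Hypothesis cured_censored : forall i, delta i -> ~~ cK i.
Hypothesis denom_neq0 : forall i, risk_denom B cK i != 0.
Implicit Types lam : nat -> R.

Definition event_weight i := B i * (delta i)%:R.
Definition censored_weight i := B i * (~~ delta i && ~~ cK i)%:R.
Definition cured_weight i := B i * (~~ delta i && cK i)%:R.
Definition survivor_weight (k : 'I_n) : R := \sum_(i < n)
  ((k < i)%N%:R * (event_weight i + censored_weight i) + cured_weight i).

Lemma survivor_weight_ge0 k : 0 <= survivor_weight k.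
Proof. by apply: sumr_ge0 => i _; rewrite !(addr_ge0, mulr_ge0). Qed.

Lemma local_lik_factor lam (i : 'I_n) : (forall k, 0 <= lam k <= 1) ->
  powR (hazard_mass lam i) (event_weight i)
  * powR (1 - \sum_(j < n | (j < i)%N) hazard_mass lam j) (censored_weight i)
  * powR (1 - \sum_(j < n) hazard_mass lam j) (cured_weight i)
  = powR (lam i) (event_weight i) * \prod_(k < n) powR (1 - lam k)
      ((k < i)%N%:R * (event_weight i + censored_weight i) + cured_weight i).
Proof.
move=> lam01; have lam_ge0 k : 0 <= lam k by case/andP: (lam01 k).
have lam'_ge0 k : 0 <= 1 - lam k by case/andP: (lam01 k); lra.
have i_le_n : (i <= n)%N by apply: ltnW.
rewrite hazard_survival_narrow // hazard_survival /hazard_mass.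
rewrite powRM ?prodr_ge0 // !powR_prod //.
rewrite !(prod_powR_narrow (fun k => 1 - lam k) _ i_le_n).
rewrite -!mulrA -!big_split /=; congr (_ * _); apply: eq_bigr => k _.
by rewrite mulrDr !powRD_ge0 ?mulrA // !(addr_ge0, mulr_ge0).
Qed.

Lemma local_lik_hazard lam : (forall k, 0 <= lam k <= 1) ->
  local_lik B delta cK (fun j : 'I_n => hazard_mass lam j)
  = \prod_(k < n) (powR (lam k) (event_weight k) * powR (1 - lam k) (survivor_weight k)).
Proof.
move=> lam01; rewrite /local_lik (eq_bigr _ (fun i _ => local_lik_factor i lam01)).
rewrite big_split /= exchange_big -big_split /=; apply: eq_bigr => k _.
by rewrite /survivor_weight powR_sum // => i; rewrite !(addr_ge0, mulr_ge0).
Qed.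

Lemma event_add_survivor_weight k : delta k ->
  event_weight k + survivor_weight k = risk_denom B cK k.
Proof.
move=> dk.
have -> : event_weight k = \sum_(i < n) (i == k)%:R * event_weight i.
  by rewrite (bigD1 k) //= eqxx mul1r big1 ?addr0 // => i /negPf ->; rewrite mul0r.
rewrite /survivor_weight /risk_denom !big_mkcond -!big_split /=.
rewrite [X in _ = X + _]big_mkcond [X in _ = _ + X]big_mkcond -big_split /=.
apply: eq_bigr => i _; rewrite /event_weight /censored_weight /cured_weight.
have [-> | i_neq_k] := eqVneq i k; first by rewrite dk leqnn ltnn /=; ring.
have [ki | ik | /val_inj ik] := ltngtP k i; last by rewrite ik eqxx in i_neq_k.
all: move: (@cured_censored i); case: (delta i) (cK i) => [] [] /=.
all: by rewrite ?(mul0r, mul1r, mulr1, mulr0, addr0, add0r) // => /(_ isT).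
Qed.

Lemma local_lik_hazard_max lam lam' :
  (forall k, 0 <= lam k <= 1) -> (forall k, 0 <= lam' k <= 1) ->
  (forall k : 'I_n, lam k * (event_weight k + survivor_weight k) = event_weight k) ->
  local_lik B delta cK (fun j : 'I_n => hazard_mass lam' j)
  <= local_lik B delta cK (fun j : 'I_n => hazard_mass lam j).
Proof.
move=> lam01 lam'01 lam_score; rewrite !local_lik_hazard //.
apply: ler_prod => k _; rewrite mulr_ge0 ?powR_ge0 //=.
apply: (bernoulli_lik_max _ (survivor_weight_ge0 k) (lam'01 k) (lam_score k)).
exact: mulr_ge0.
Qed.

Definition mle_hazard : nat -> R :=
  ord_ext0 (fun i => (delta i)%:R * B i / risk_denom B cK i).

Lemma weight_le_risk_denom i : B i <= risk_denom B cK i.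
Proof.
rewrite /risk_denom (bigD1 i) //= -addrA lerDl.
by rewrite addr_ge0 ?sumr_ge0 // => j _; rewrite mulr_ge0.
Qed.

Lemma risk_denom_gt0 i : 0 < risk_denom B cK i.
Proof.
by rewrite lt_neqAle eq_sym denom_neq0 (le_trans (B_ge0 i)) ?weight_le_risk_denom.
Qed.

Lemma mle_hazard01 k : 0 <= mle_hazard k <= 1.
Proof.
rewrite /mle_hazard /ord_ext0; case: insub => [i|]; last by rewrite lexx ler01.
have den_gt0 := risk_denom_gt0 i.
rewrite divr_ge0 ?mulr_ge0 ?(ltW den_gt0) //= ler_pdivrMr // mul1r.
by case: (delta i); rewrite ?mul1r ?mul0r ?weight_le_risk_denom ?(ltW den_gt0).
Qed.

Lemma mle_hazard_score (k : 'I_n) :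
  mle_hazard k * (event_weight k + survivor_weight k) = event_weight k.
Proof.
rewrite /mle_hazard ord_ext0E; case dk: (delta k).
  by rewrite (event_add_survivor_weight dk) mul1r divfK // /event_weight dk mulr1.
by rewrite !mul0r /event_weight dk mulr0.
Qed.

Lemma S_hat_mle_hazard (T : 'I_n -> R) t m : (m <= n)%N ->
  (forall j, (T j <= t) = (j < m)%N) ->
  S_hat T B delta cK t = \prod_(k < m) (1 - mle_hazard k).
Proof.
move=> mn Tm; rewrite /S_hat.
rewrite (eq_bigr (fun i : 'I_n => if (i < m)%N then 1 - mle_hazard i else 1)).
  by rewrite -big_mkcond (big_ord_narrow mn).
move=> i _; rewrite Tm /mle_hazard ord_ext0E.
by case: ifP; rewrite ?mulr1 ?mulr0 ?mul0r ?subr0.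
Qed.

End LocalLikelihood.

Lemma downclosed_ord_prefix n (P : pred 'I_n) :
  (forall i j : 'I_n, (i <= j)%N -> P j -> P i) ->
  exists2 m, (m <= n)%N & forall j, P j = (j < m)%N.
Proof.
move=> P_down; exists (\max_(j | P j) j.+1)%N; first by apply/bigmax_leqP.
move=> j; apply/idP/idP => [Pj | ]; first exact: (leq_bigmax_cond _ Pj).
apply: contraLR; rewrite -leqNgt => notPj; apply/bigmax_leqP => k Pk.
by rewrite ltnNge; apply: contra notPj => /P_down; apply.
Qed.

Theorem proposition2 (R : realType) (n : nat)
  (X T : 'I_n -> R) (delta cK : 'I_n -> bool)
  (K : R -> R) (h x : R)
  (hT : forall i j : 'I_n, (i < j)%N -> T i < T j)
  (hcured : forall i, delta i -> ~~ cK i)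
  (hh : 0 < h)
  (hB : forall i, 0 <= nw_weight K h X x i)
  (hden : forall i, risk_denom (nw_weight K h X x) cK i != 0) :
  exists P : 'I_n -> R,
    feasible P /\
    (forall Q : 'I_n -> R, feasible Q ->
       local_lik (nw_weight K h X x) delta cK Q
       <= local_lik (nw_weight K h X x) delta cK P) /\
    (forall t : R,
       1 - \sum_(j < n | T j <= t) P j = S_hat T (nw_weight K h X x) delta cK t).
Proof.
set B := nw_weight K h X x in hB hden *.
set lam := mle_hazard B delta cK.
have lam01 := mle_hazard01 delta hB hden.
exists (fun j : 'I_n => hazard_mass lam j); split; [|split].
- exact: feasible_hazard_mass.
- move=> Q /feasible_eq_hazard_mass [mu mu01 QE].
  rewrite (_ : Q = fun j => hazard_mass mu j); last exact: funext.
  exact: (local_lik_hazard_max hB lam01 mu01 (mle_hazard_score hcured hden)).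
- move=> t; have T_down (i j : 'I_n) : (i <= j)%N -> T j <= t -> T i <= t.
    by rewrite leq_eqVlt => /orP[/eqP/val_inj -> // | /hT/ltW]; apply: le_trans.
  have [m mn Tm] := downclosed_ord_prefix (P := fun j => T j <= t) T_down.
  rewrite (eq_bigl _ _ Tm) hazard_survival_narrow //.
  by rewrite (S_hat_mle_hazard _ _ _ mn Tm).
Qed.
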